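(* For any generalized causal teams $S$ and $T$ over a signature $\sigma$: $S\models^g\bigvee_{\mathcal F\in\mathbb F_\sigma}\big(\Theta^{(T^{\mathcal F})^-}\wedge\Phi^{\mathcal F}\big)$ if and only if $S\preccurlyeq T$.
   Context: A signature $\sigma=(\mathrm{Dom},\mathrm{Ran})$: $\mathrm{Dom}$ nonempty finite set of variables, each with nonempty finite range $\mathrm{Ran}(X)$; $\mathbf X=\mathbf x$ abbreviates $X_1=x_1\wedge\dots\wedge X_n=x_n$ ($\mathbf x\in\prod\mathrm{Ran}(X_i)$), inconsistent if it contains $X=x,X=x'$ with $x\ne x'$. $\mathcal{CO}[\sigma]$: $\alpha::=X=x\mid\neg\alpha\mid\alpha\wedge\alpha\mid\alpha\vee\alpha\mid\mathbf X=\mathbf x\;\Box\!\!\rightarrow\alpha$; $\alpha\supset\beta$ abbreviates $\neg\alpha\vee\beta$; $\bot$ abbreviates $X=x\wedge\neg(X=x)$. Systems of functions $\mathcal F$: for each $V\in\mathrm{En}(\mathcal F)\subseteq\mathrm{Dom}$ parents $PA^{\mathcal F}_V\subseteq\mathrm{Dom}\setminus\{V\}$ and $\mathcal F_V:\mathrm{Ran}(PA^{\mathcal F}_V)\to\mathrm{Ran}(V)$; $\mathrm{Ex}(\mathcal F)=\mathrm{Dom}\setminus\mathrm{En}(\mathcal F)$; only recursive (acyclic parent graph), forming the finite set $\mathbb F_\sigma$. An assignment $s$ is compatible with $\mathcal F$ if $s(V)=\mathcal F_V(s(PA^{\mathcal F}_V))$ for $V\in\mathrm{En}(\mathcal F)$.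 A generalized causal team is a set $T$ of compatible pairs $(s,\mathcal F)$ with $\mathcal F\in\mathbb F_\sigma$; causal subteams are subsets; $T^-=\{s:(s,\mathcal F)\in T\}$. For consistent $\mathbf X=\mathbf x$: $\mathcal F_{\mathbf X=\mathbf x}$ restricts $\mathcal F$ to $\mathrm{En}(\mathcal F)\setminus\mathbf X$; $s^{\mathcal F}_{\mathbf X=\mathbf x}$: $X_i\mapsto x_i$, $V\mapsto s(V)$ on $\mathrm{Ex}(\mathcal F)\setminus\mathbf X$, $V\mapsto\mathcal F_V(s^{\mathcal F}_{\mathbf X=\mathbf x}(PA^{\mathcal F}_V))$ on $\mathrm{En}(\mathcal F)\setminus\mathbf X$; $T_{\mathbf X=\mathbf x}=\{(s^{\mathcal F}_{\mathbf X=\mathbf x},\mathcal F_{\mathbf X=\mathbf x}):(s,\mathcal F)\in T\}$. $\models^g$: $T\models X=x$ iff $s(X)=x$ for all $s\in T^-$; $T\models\neg\alpha$ iff $\{(s,\mathcal F)\}\not\models\alpha$ for all $(s,\mathcal F)\in T$; $\wedge$ classical; $T\models\alpha\vee\beta$ iff $T=T_1\cup T_2$ with $T_1\models\alpha$, $T_2\models\beta$ (an empty $\vee$-disjunction is $\bot$); $T\models\mathbf X=\mathbf x\;\Box\!\!\rightarrow\alpha$ iff $\mathbf X=\mathbf x$ inconsistent or $T_{\mathbf X=\mathbf x}\models\alpha$. $\mathrm{Cn}(\mathcal F)=\{V\in\mathrm{En}(\mathcal F):\mathcal F_V\text{ constant}\}$; $\mathcal F_V\sim\mathcal G_V$ iff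 $\mathcal F_V(\mathbf x\mathbf y)=\mathcal G_V(\mathbf x\mathbf z)$ for all $\mathbf x\in\mathrm{Ran}(PA^{\mathcal F}_V\cap PA^{\mathcal G}_V)$, $\mathbf y\in\mathrm{Ran}(PA^{\mathcal F}_V\setminus PA^{\mathcal G}_V)$, $\mathbf z\in\mathrm{Ran}(PA^{\mathcal G}_V\setminus PA^{\mathcal F}_V)$; $\mathcal F\sim\mathcal G$ iff $\mathrm{En}(\mathcal F)\setminus\mathrm{Cn}(\mathcal F)=\mathrm{En}(\mathcal G)\setminus\mathrm{Cn}(\mathcal G)$ and $\mathcal F_V\sim\mathcal G_V$ for each such $V$. $T^{\mathcal F}=\{(s,\mathcal G)\in T:\mathcal G\sim\mathcal F\}$; $S\approx T$ iff $(S^{\mathcal F})^-=(T^{\mathcal F})^-$ for all $\mathcal F\in\mathbb F_\sigma$; $S\preccurlyeq T$ iff $S\approx R$ for some $R\subseteq T$ (and $\emptyset\preccurlyeq T$ always). $\Theta^{A}:=\bigvee_{s\in A}\bigwedge_{V\in\mathrm{Dom}}V=s(V)$ for a set $A$ of assignments ($\bot$ if $A=\emptyset$). With $\mathbf W_V$ listing $\mathrm{Dom}\setminus\{V\}$: $\Phi^{\mathcal F}:=\bigwedge_{V\in\mathrm{En}(\mathcal F)\setminus\mathrm{Cn}(\mathcal F)}\eta(V)\wedge\bigwedge_{V\notin\mathrm{En}(\mathcal F)\setminus\mathrm{Cn}(\mathcal F)}\xi(V)$, where $\eta(V)$ is the conjunction of all $(\mathbf W=\mathbf w\wedge PA^{\mathcal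 F}_V=\mathbf p)\;\Box\!\!\rightarrow V=\mathcal F_V(\mathbf p)$ ($\mathbf W$ listing $\mathrm{Dom}\setminus(PA^{\mathcal F}_V\cup\{V\})$, $\mathbf w\in\mathrm{Ran}(\mathbf W)$, $\mathbf p\in\mathrm{Ran}(PA^{\mathcal F}_V)$) and $\xi(V)$ is the conjunction of all $V=v\supset(\mathbf W_V=\mathbf w\;\Box\!\!\rightarrow V=v)$ ($v\in\mathrm{Ran}(V)$, $\mathbf w\in\mathrm{Ran}(\mathbf W_V)$). *)

From mathcomp Require Import all_boot.

Record signature := Signature {
  var : finType;
  ran : var -> finType;
  var0 : var;
  ran0 : forall X : var, ran X }.

Set Implicit Arguments.
Unset Strict Implicit.
Unset Printing Implicit Defensive.

Section CO.
Variable sg : signature.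
Local Notation V := (var sg).
Local Notation Ran := (ran sg).

Definition assn := {dffun forall v : V, Ran v}.

Definition atom := {X : V & Ran X}.

(* Syntax of CO[sigma].  An intervention antecedent X = x is a sequence of
   atoms (X_1 = x_1 /\ ... /\ X_n = x_n). *)
Inductive form :=
| FEq (X : V) (x : Ran X)
| FNeg (a : form)
| FAnd (a b : form)
| FOr (a b : form)
| FCf (xs : seq atom) (a : form).

Definition FImp (a b : form) := FOr (FNeg a) b.
Definition FBot : form := FAnd (FEq (@ran0 sg (var0 sg))) (FNeg (FEq (@ran0 sg (var0 sg)))).

Fixpoint bigOr (l : seq form) : form :=
  match l with
  | [::] => FBot
  | [:: a] => a
  | a :: l' => FOr a (bigOr l')
  end.
(* (the empty conjunction never occurs below since all ranges and Dom are
   nonempty; we use bottom as a dummy value) *)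
Fixpoint bigAnd (l : seq form) : form :=
  match l with
  | [::] => FBot
  | [:: a] => a
  | a :: l' => FAnd a (bigAnd l')
  end.

(* F_V is encoded as a function of the
   whole assignment that (for V in En) depends only on the PA_V coordinates;
   outside En the data is fixed to a canonical default. *)
Definition sys := ({set V} * {ffun V -> {set V}} * {dffun forall v : V, {ffun assn -> Ran v}})%type.
Definition En (F : sys) : {set V} := F.1.1.
Definition PA (F : sys) (v : V) : {set V} := F.1.2 v.
Definition Fn (F : sys) (v : V) : assn -> Ran v := fun s => F.2 v s.

Definition parent_rel (F : sys) : rel V := fun a b => a \in PA F b.

Definition valid (F : sys) : bool :=
  [&& [forall v, v \notin PA F v],
      [forall v, (v \notin En F) ==> (PA F v == set0) && (F.2 v == [ffun s : assn => s v])],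
      [forall v, (v \in En F) ==>
          [forall s : assn, forall t : assn,
             [forall u in PA F v, s u == t u] ==> (Fn F v s == Fn F v t)]] &
      [forall u, forall v, (u \in PA F v) ==> ~~ connect (parent_rel F) v u]].

Definition Fsigma : seq sys := [seq F <- enum {: sys} | valid F].

Definition compatible (s : assn) (F : sys) : bool :=
  [forall v, (v \in En F) ==> (s v == Fn F v s)].

Definition team := {set assn * sys}.

Definition gcteam (T : team) : Prop :=
  forall p, p \in T -> valid p.2 /\ compatible p.1 p.2.

Definition Tminus (T : team) : {set assn} := [set p.1 | p in T].

Definition in_dom (xs : seq atom) (v : V) : bool := has (fun a => tag a == v) xs.
Definition consistent (xs : seq atom) : bool :=
  all (fun a => all (fun b => (tag a == tag b) ==> (a == b)) xs) xs.

Definition interv_sys (xs : seq atom) (F : sys) : sys :=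
  let En' := [set v in En F | ~~ in_dom xs v] in
  (En', [ffun v => if v \in En' then PA F v else set0],
   [ffun v => if v \in En' then F.2 v else [ffun s : assn => s v]]).

(* s^F_{X=x}: the (unique, by recursiveness) assignment t with t(X_i) = x_i,
   t(V) = s(V) for exogenous V not in X, t(V) = F_V(t(PA_V)) for endogenous V
   not in X. *)
Definition interv_cond (xs : seq atom) (s : assn) (F : sys) (t : assn) : bool :=
  [forall v, if in_dom xs v then Tagged Ran (t v) \in xs
             else if v \in En F then t v == Fn F v t
             else t v == s v].
Definition interv_assn (xs : seq atom) (s : assn) (F : sys) : assn :=
  odflt s [pick t | interv_cond xs s F t].

Definition interv (xs : seq atom) (T : team) : team :=
  [set (interv_assn xs p.1 p.2, interv_sys xs p.2) | p in T].

Fixpoint sat (T : team) (a : form) : Prop :=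
  match a with
  | FEq X x => forall p, p \in T -> p.1 X = x
  | FNeg b => forall p, p \in T -> ~ sat [set p] b
  | FAnd b c => sat T b /\ sat T c
  | FOr b c => exists T1 T2, T = T1 :|: T2 /\ sat T1 b /\ sat T2 c
  | FCf xs b => ~~ consistent xs \/ sat (interv xs T) b
  end.

Definition Cn (F : sys) : {set V} :=
  [set v in En F | [forall s : assn, forall t : assn, Fn F v s == Fn F v t]].
Definition EnCn (F : sys) : {set V} := En F :\: Cn F.

Definition sim_fun (F G : sys) (v : V) : bool :=
  [forall s : assn, forall t : assn,
     [forall u in PA F v :&: PA G v, s u == t u] ==> (Fn F v s == Fn G v t)].
Definition sim (F G : sys) : bool :=
  (EnCn F == EnCn G) && [forall v in EnCn F, sim_fun F G v].

Definition restrF (T : team) (F : sys) : team := [set p in T | sim p.2 F].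

Definition approx (S T : team) : Prop :=
  forall F, valid F -> Tminus (restrF S F) = Tminus (restrF T F).
Definition preceq (S T : team) : Prop :=
  S = set0 \/ exists R : team, R \subset T /\ approx S R.

Definition Theta (A : {set assn}) : form :=
  bigOr [seq bigAnd [seq FEq (s v) | v <- enum V] | s : assn <- enum A].

(* assignments to Dom \ {v} are represented by the assignments s with
   s v = ran0 v (a bijective correspondence) *)
Definition rest_assns (v : V) : seq assn := [seq s : assn <- enum {: assn} | s v == @ran0 sg v].

Definition eta (F : sys) (v : V) : form :=
  bigAnd [seq FCf ([seq Tagged Ran (s u) | u <- enum V & (u \notin PA F v) && (u != v)]
                   ++ [seq Tagged Ran (s u) | u <- enum (PA F v)])
                  (FEq (Fn F v s))
         | s : assn <- rest_assns v].

Definition xi (v : V) : form :=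
  bigAnd [seq FImp (FEq x) (FCf [seq Tagged Ran (s u) | u <- enum V & u != v] (FEq x))
         | x <- enum (Ran v), s : assn <- rest_assns v].

Definition Phi (F : sys) : form :=
  bigAnd [seq if v \in EnCn F then eta F v else xi v | v <- enum V].

Definition bigformula (T : team) : form :=
  bigOr [seq FAnd (Theta (Tminus (restrF T F))) (Phi F) | F <- Fsigma].

End CO.

From Stdlib Require Import Setoid.
From mathcomp Require Import all_boot.

(* A team satisfies Phi^F exactly when the system of each of its pairs is similar
   to F.  Intervening on all variables but V with values w makes V take the value
   F_V(w) when V is endogenous and s(V) otherwise; the eta(V) conjuncts thus pin
   down F_V for the non-constant endogenous V of F, and the xi(V) conjuncts say
   that every other V keeps its value under all such interventions, which is what
   exogenous and constant variables of a compatible pair do.  Theta^A says that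
   the assignments of the team lie in A.  Hence S satisfies the disjunction iff
   each (s, G) in S has a twin (s, G') in T with G' ~ G, and this reformulates
   S <= T, with the witness R the set of such twins. *)

Set Implicit Arguments.
Unset Strict Implicit.
Unset Printing Implicit Defensive.

Lemma mem_nonnil (X : eqType) (x : X) (l : seq X) : x \in l -> l != [::].
Proof. by case: l. Qed.

Section Characterization.
Variable sg : signature.
Local Notation V := (var sg).
Local Notation Ran := (ran sg).
Implicit Types (S T U : team sg) (F G : sys sg) (s t w : assn sg) (v : V).

Definition depends_on (X : Type) (f : assn sg -> X) (A : {set V}) :=
  forall s t, (forall u, u \in A -> s u = t u) -> f s = f t.

Lemma depends_on_subset (X : Type) (f : assn sg -> X) (A B : {set V}) :
  depends_on f A -> A \subset B -> depends_on f B.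
Proof. by move=> fA /subsetP AB s t st; apply: fA => u /AB /st. Qed.

Lemma depends_onI (X : Type) (f : assn sg -> X) (A B : {set V}) :
  depends_on f A -> depends_on f B -> depends_on f (A :&: B).
Proof.
move=> fA fB s t st.
pose m : assn sg := finfun (fun u => if u \in A then s u else t u).
rewrite (fA s m) => [|u uA]; last by rewrite ffunE uA.
apply: fB => u uB; rewrite ffunE; case: ifP => // uA.
by apply: st; rewrite inE uA.
Qed.

Lemma valid_noself F v : valid F -> v \notin PA F v.
Proof. by case/and4P => /forallP. Qed.

Lemma valid_depends F v : valid F -> v \in En F -> depends_on (Fn F v) (PA F v).
Proof.
move=> + vE; case/and4P => _ _ /forall_inP /(_ v vE) /forallP Fv _ s t st.
apply/eqP; apply: (implyP (forallP (Fv s) t)).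
by apply/forall_inP => u /st ->.
Qed.

Lemma mem_EnCn F v :
  (v \in EnCn F) = (v \in En F) && ~~ [forall s, forall t, Fn F v s == Fn F v t].
Proof. by rewrite !inE; case: (v \in En F); rewrite ?andbT ?andbF. Qed.

Lemma EnCn_En F v : v \in EnCn F -> v \in En F.
Proof. by rewrite mem_EnCn => /andP []. Qed.

Lemma notin_EnCn_const F v (c : Ran v) : (forall w, Fn F v w = c) -> v \notin EnCn F.
Proof.
move=> Fc; rewrite mem_EnCn negb_and negbK; apply/orP; right.
by apply/forallP => s; apply/forallP => t; rewrite !Fc.
Qed.

Lemma eq_Fn_EnCn F G v : v \in En G -> (forall w, Fn G v w = Fn F v w) ->
  v \in EnCn F -> v \in EnCn G.
Proof.
move=> vEG FGe; rewrite !mem_EnCn vEG => /andP [_]; apply: contra => /forallP cG.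
by apply/forallP => s; apply/forallP => t; rewrite -!FGe; apply: (forallP (cG s)).
Qed.

Lemma sim_funE F G v : sim_fun F G v <->
  (forall s, Fn F v s = Fn G v s) /\ depends_on (Fn F v) (PA F v :&: PA G v).
Proof.
have simP : reflect (forall s t, (forall u, u \in PA F v :&: PA G v -> s u = t u) ->
                       Fn F v s = Fn G v t) (sim_fun F G v).
  apply: (iffP forallP) => [H s t st|H s]; last first.
    by apply/forallP => t; apply/implyP => /forall_inP st; apply/eqP/H => u /st /eqP.
  by apply/eqP/(implyP (forallP (H s) t)); apply/forall_inP => u /st ->.
split=> [/simP H|[FG dF]]; last by apply/simP => s t /dF ->.
by split=> [s|s t st]; [apply: H | rewrite (H s t st) -(H t t)].
Qed.

Lemma sim_fun_sym F G v : sim_fun F G v -> sim_fun G F v.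
Proof.
case/sim_funE => FG dF; apply/sim_funE; split=> [s|s t st]; first by rewrite FG.
by rewrite -!FG; apply: dF => u; rewrite setIC; apply: st.
Qed.

Lemma sim_fun_trans F G H v : sim_fun F G v -> sim_fun G H v -> sim_fun F H v.
Proof.
case/sim_funE => FG dF /sim_funE [GH dG]; apply/sim_funE.
split=> [s|]; first by rewrite FG GH.
have dG' : depends_on (Fn G v) (PA F v :&: PA G v).
  by move=> s t st; rewrite -!FG; apply: dF.
have dGFH : depends_on (Fn G v) (PA F v :&: PA H v).
  apply: depends_on_subset (depends_onI dG' dG) _.
  by apply/subsetP => u; rewrite !inE => /andP [/andP [-> _] /andP [_ ->]].
by move=> s t st; rewrite !FG; apply: dGFH.
Qed.

Lemma eq_Fn_sim_fun F G v : valid F -> valid G -> v \in En F -> v \in En G ->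
  (forall s, Fn F v s = Fn G v s) -> sim_fun F G v.
Proof.
move=> vF vG vEF vEG FG; apply/sim_funE; split=> //.
apply: depends_onI; first exact: valid_depends.
by move=> s t st; rewrite !FG; apply: (valid_depends vG vEG).
Qed.

Lemma simE F G :
  sim F G <-> EnCn F = EnCn G /\ forall v, v \in EnCn F -> sim_fun F G v.
Proof.
split=> [/andP [/eqP EE /forall_inP FG] | [EE FG]]; first by split.
by apply/andP; split; [rewrite EE | apply/forall_inP].
Qed.

Lemma sim_refl F : valid F -> sim F F.
Proof. by move=> vF; apply/simE; split=> // v /EnCn_En vE; apply: eq_Fn_sim_fun. Qed.

Lemma sim_sym F G : sim F G -> sim G F.
Proof.
by case/simE => EE FG; apply/simE; split=> // v; rewrite -EE => /FG /sim_fun_sym.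
Qed.

Lemma sim_trans F G H : sim F G -> sim G H -> sim F H.
Proof.
case/simE => EFG FG /simE [EGH GH]; apply/simE; split; first by rewrite EFG.
by move=> v vE; apply: sim_fun_trans (FG v vE) (GH v _); rewrite -EFG.
Qed.

Definition upd w v (c : Ran v) : assn sg := finfun (dfwith (fun u => w u) c).

Lemma upd_at w v (c : Ran v) : upd w c v = c.
Proof. by rewrite /upd ffunE dfwith_in. Qed.

Lemma upd_out w v (c : Ran v) u : u != v -> upd w c u = w u.
Proof. by move=> uv; rewrite /upd ffunE dfwith_out // eq_sym. Qed.

Lemma upd_id w v t : (forall u, u != v -> t u = w u) -> t = upd w (t v).
Proof.
move=> tw; apply/ffunP => u.
by case: (eqVneq u v) => [->|uv]; rewrite ?upd_at // upd_out // tw.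
Qed.

Lemma Fn_upd F v w (c : Ran v) : valid F -> v \in En F -> Fn F v (upd w c) = Fn F v w.
Proof.
move=> vF vE; apply: (valid_depends vF vE) => u uP; apply: upd_out.
by apply: contraNneq (valid_noself v vF) => uv; rewrite -{1}uv.
Qed.

Lemma mem_rest_assns v s : (s \in rest_assns v) = (s v == ran0 sg v).
Proof. by rewrite mem_filter mem_enum andbT. Qed.

Lemma upd_rest_assns v w : upd w (ran0 sg v) \in rest_assns v.
Proof. by rewrite mem_rest_assns upd_at. Qed.

Lemma rest_assns_nonnil v : rest_assns v != [::].
Proof.
by apply: (@mem_nonnil _ (finfun (@ran0 sg) : assn sg)); rewrite mem_rest_assns ffunE.
Qed.

Lemma sat_set0 (a : form sg) : sat set0 a.
Proof.
elim: a => [X x|b _|b IHb c IHc|b IHb c IHc|xs b IH] /=; try by move=> p; rewrite inE.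
- by [].
- by exists set0, set0; rewrite setU0.
- by right; rewrite /interv imset0.
Qed.

Lemma sat_FBot T : sat T (FBot sg) <-> T = set0.
Proof.
split=> [[/= Hx Hn]|->]; last exact: sat_set0.
apply/setP => p; rewrite inE; apply/negP => pT.
by apply: (Hn p pT) => q /set1P ->; apply: Hx.
Qed.

Lemma sat_neg_eq T X (x : Ran X) :
  sat T (FNeg (FEq x)) <-> forall p, p \in T -> p.1 X != x.
Proof.
split=> H p pT; last by move=> /(_ p (set11 p)); apply/eqP/H.
by apply/eqP => px; apply: (H p pT) => q /set1P ->.
Qed.

Lemma sat_bigOr_witness (X : eqType) (g : X -> form sg) (l : seq X) T p :
  sat T (bigOr (map g l)) -> p \in T ->
  exists x T', [/\ x \in l, T' \subset T, p \in T' & sat T' (g x)].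
Proof.
elim: l T => [|x [|y l] IH] T /=.
- by move/sat_FBot => ->; rewrite inE.
- by move=> Tg pT; exists x, T; rewrite mem_seq1 eqxx subxx.
- case=> [T1 [T2 [-> [T1g T2g]]]] /setUP [pT|pT].
    by exists x, T1; rewrite inE eqxx subsetUl.
  have [z [T' [zl sT' pT' T'g]]] := IH _ T2g pT.
  by exists z, T'; rewrite inE zl orbT (subset_trans sT' (subsetUr _ _)).
Qed.

Lemma sat_bigOr_cover (X : eqType) (g : X -> form sg) (K : X -> team sg) l T :
  T = \bigcup_(x <- l) K x -> (forall x, x \in l -> sat (K x) (g x)) ->
  sat T (bigOr (map g l)).
Proof.
elim: l T => [|x [|y l] IH] T.
- by rewrite big_nil => -> _; apply: sat_set0.
- by rewrite big_seq1 => -> Kg; apply: Kg; rewrite mem_seq1.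
- rewrite big_cons => -> Kg; exists (K x), (\bigcup_(j <- y :: l) K j).
  split=> //; split; first by apply: Kg; rewrite inE eqxx.
  by apply: IH => // z zl; apply: Kg; rewrite inE zl orbT.
Qed.

Lemma sat_bigAnd_map (X : eqType) (g : X -> form sg) (l : seq X) T :
  l != [::] -> sat T (bigAnd (map g l)) <-> forall x, x \in l -> sat T (g x).
Proof.
elim: l => [|x [|y l] IH] // _.
- split=> [gx z|H]; last by apply: H; rewrite mem_seq1.
  by rewrite mem_seq1 => /eqP ->.
- have -> : bigAnd (map g [:: x, y & l]) = FAnd (g x) (bigAnd (map g (y :: l))) by [].
  rewrite /= (IH isT); split=> [[gx gl] z /predU1P [->|]|gl] //; first exact: gl.
  by split=> [|z zl]; apply: gl; rewrite inE ?eqxx ?zl ?orbT.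
Qed.

Lemma sat_bigAnd_allpairs (X Y : eqType) (g : X -> Y -> form sg) l1 l2 T :
  l1 != [::] -> l2 != [::] ->
  sat T (bigAnd [seq g x y | x <- l1, y <- l2]) <->
  forall x y, x \in l1 -> y \in l2 -> sat T (g x y).
Proof.
move=> nl1 nl2; rewrite -[X in bigAnd X](map_allpairs (fun p => g p.1 p.2) pair).
rewrite sat_bigAnd_map; last by case: l1 l2 nl1 nl2 => [|x l1] [|y l2].
split=> [H x y xl yl|H _ /allpairsP [[x y] [/= xl yl ->]]]; last exact: H.
by apply: (H (x, y)); apply/allpairsP; exists (x, y).
Qed.

Lemma gcteam_subset U T : gcteam T -> U \subset T -> gcteam U.
Proof. by move=> gT /subsetP UT p /UT /gT. Qed.

Definition all_but_atoms v w : seq (atom sg) :=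
  [seq Tagged Ran (w u) | u <- enum V & u != v].

Definition interv_value s G v w : Ran v := if v \in En G then Fn G v w else s v.

Lemma mem_map_Tagged (l : seq V) s u (x : Ran u) :
  (Tagged Ran x \in [seq Tagged Ran (s u') | u' <- l]) = (u \in l) && (x == s u).
Proof.
apply/mapP/andP => [[u' u'l e]|[ul /eqP ->]]; last by exists u.
by have /= eu := congr1 tag e; subst u'; rewrite u'l (eq_from_Tagged e) eqxx.
Qed.

Lemma mem_all_but_atoms v w u (x : Ran u) :
  (Tagged Ran x \in all_but_atoms v w) = (u != v) && (x == w u).
Proof. by rewrite mem_map_Tagged mem_filter mem_enum andbT. Qed.

Lemma interv_value_upd s G v w (c : Ran v) : valid G ->
  interv_value s G v (upd w c) = interv_value s G v w.
Proof. by move=> vG; rewrite /interv_value; case: ifP => // vE; rewrite Fn_upd. Qed.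

Section AllButIntervention.
Variables (xs : seq (atom sg)) (v : V) (w : assn sg).
Hypothesis xs_all_but : xs =i all_but_atoms v w.

Lemma in_dom_all_but u : in_dom xs u = (u != v).
Proof.
rewrite /in_dom (eq_has_r xs_all_but); apply/hasP/idP => [[[u' x]]|uv].
  by rewrite mem_all_but_atoms => /andP [u'v _] /= /eqP <-.
by exists (Tagged Ran (w u)); rewrite ?mem_all_but_atoms ?uv ?eqxx.
Qed.

Lemma consistent_all_but : consistent xs.
Proof.
rewrite /consistent (eq_all_r xs_all_but); apply/allP => -[u x].
rewrite mem_all_but_atoms (eq_all_r xs_all_but) => /andP [_ /eqP ->].
apply/allP => -[u' y]; rewrite mem_all_but_atoms => /andP [_ /eqP ->].
by apply/implyP => /= /eqP eu; subst u'.
Qed.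

Lemma interv_condE s G t : valid G ->
  interv_cond xs s G t = (t == upd w (interv_value s G v w)).
Proof.
move=> vG; apply/forallP/eqP => [tcond|-> u].
  have tw : t = upd w (t v).
    apply: upd_id => u uv; move: (tcond u).
    by rewrite in_dom_all_but uv xs_all_but mem_all_but_atoms uv => /eqP.
  rewrite {1}tw /interv_value; congr upd; move: (tcond v).
  rewrite in_dom_all_but eqxx /=; case: ifP => // vE /eqP -> //.
  by rewrite tw Fn_upd.
rewrite in_dom_all_but; case: (eqVneq u v) => [->|uv] /=.
  by rewrite upd_at /interv_value; case vE: (v \in En G); rewrite ?Fn_upd.
by rewrite xs_all_but upd_out // mem_all_but_atoms uv eqxx.
Qed.

Lemma interv_assn_all_but s G : valid G ->
  interv_assn xs s G = upd w (interv_value s G v w).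
Proof.
move=> vG; rewrite /interv_assn; case: pickP => [t|none].
  by rewrite interv_condE // => /eqP.
by have := none (upd w (interv_value s G v w)); rewrite interv_condE // eqxx.
Qed.

Lemma sat_cf_all_but U (c : Ran v) : (forall p, p \in U -> valid p.2) ->
  sat U (FCf xs (FEq c)) <-> forall p, p \in U -> interv_value p.1 p.2 v w = c.
Proof.
move=> vU /=; rewrite consistent_all_but /=.
split=> [[//|Hc] p pU|Hc]; last first.
  by right=> _ /imsetP [p pU ->] /=; rewrite interv_assn_all_but ?vU // upd_at Hc.
rewrite -(upd_at w (interv_value p.1 p.2 v w)) -interv_assn_all_but ?vU //.
exact: (Hc (interv_assn xs p.1 p.2, interv_sys xs p.2) (imset_f _ pU)).
Qed.

End AllButIntervention.

Lemma eta_atoms_all_but F v s : valid F ->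
  [seq Tagged Ran (s u) | u <- enum V & (u \notin PA F v) && (u != v)]
    ++ [seq Tagged Ran (s u) | u <- enum (PA F v)] =i all_but_atoms v s.
Proof.
move=> vF [u x]; rewrite mem_all_but_atoms mem_cat !mem_map_Tagged mem_filter !mem_enum.
case uP: (u \in PA F v); rewrite /= ?orbF ?andbT //.
by rewrite (contraTneq _ uP) // => ->; apply: valid_noself.
Qed.

Lemma sat_eta U F v : (forall p, p \in U -> valid p.2) -> valid F -> v \in En F ->
  sat U (eta F v) <->
  forall p, p \in U -> forall w, interv_value p.1 p.2 v w = Fn F v w.
Proof.
move=> vU vF vE; rewrite sat_bigAnd_map ?rest_assns_nonnil //.
split=> [H p pU w|H s _]; last first.
  by apply/(sat_cf_all_but (eta_atoms_all_but v s vF) _ vU) => p pU; apply: H.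
rewrite -(interv_value_upd _ _ (ran0 sg v) (vU p pU)) -(Fn_upd w (ran0 sg v) vF vE).
move: (H _ (upd_rest_assns v w)).
by move/(sat_cf_all_but (eta_atoms_all_but v _ vF) _ vU); apply.
Qed.

Lemma sat_xi U v : (forall p, p \in U -> valid p.2) ->
  sat U (xi v) <-> forall p, p \in U -> forall w, interv_value p.1 p.2 v w = p.1 v.
Proof.
move=> vU; rewrite sat_bigAnd_allpairs ?rest_assns_nonnil //; last first.
  exact: mem_nonnil (mem_enum _ (ran0 sg v)).
split=> [H p pU w|H x s _ _].
  have [T1 [T2 [eU [T1x T2x]]]] := H _ _ (mem_enum _ (p.1 v)) (upd_rest_assns v w).
  have vT2 q : q \in T2 -> valid q.2 by move=> qT2; apply: vU; rewrite eU inE qT2 orbT.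
  have pT2 : p \in T2.
    move: pU; rewrite eU => /setUP [pT1|//].
    by move/sat_neg_eq: T1x => /(_ p pT1); rewrite eqxx.
  rewrite -(interv_value_upd _ _ (ran0 sg v) (vU p pU)).
  by move/(sat_cf_all_but (fun _ => erefl) _ vT2): T2x; apply.
have vUx q : q \in [set p in U | p.1 v == x] -> valid q.2.
  by move=> /[!inE] /andP [/vU].
exists [set p in U | p.1 v != x], [set p in U | p.1 v == x]; split.
  by apply/setP => p; rewrite !inE -andb_orr orNb andbT.
split; first by apply/sat_neg_eq => p /[!inE] /andP [].
by apply/(sat_cf_all_but (fun _ => erefl) _ vUx) => p /[!inE] /andP [pU /eqP <-]; apply: H.
Qed.

Lemma sat_Phi U F : (forall p, p \in U -> valid p.2) -> valid F ->
  sat U (Phi F) <-> forall p, p \in U -> forall v w,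
    interv_value p.1 p.2 v w = if v \in EnCn F then Fn F v w else p.1 v.
Proof.
move=> vU vF; rewrite sat_bigAnd_map ?(mem_nonnil (mem_enum _ (var0 sg))) //.
split=> [H p pU v w|H v _].
  move: (H v (mem_enum _ v)); case: ifP => vE.
    by move/(sat_eta vU vF (EnCn_En vE)); apply.
  by move/(sat_xi _ vU); apply.
by case: ifP => vE; [apply/(sat_eta vU vF (EnCn_En vE)) | apply/(sat_xi _ vU)];
  move=> p pU w; rewrite H // vE.
Qed.

Lemma sim_interv_value s G F : compatible s G -> sim G F ->
  forall v w, interv_value s G v w = if v \in EnCn F then Fn F v w else s v.
Proof.
move=> cG /simE [EE GF] v w; rewrite /interv_value -EE.
case: (boolP (v \in EnCn G)) => vE.
  by rewrite (EnCn_En vE); case/sim_funE: (GF v vE).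
case: ifP => // vEG; move: vE; rewrite mem_EnCn vEG negbK => /forallP Gc.
by rewrite (eqP (forallP (Gc w) s)); move/forallP/(_ v)/implyP/(_ vEG)/eqP: cG.
Qed.

Lemma interv_value_sim s G F : valid G -> valid F ->
  (forall v w, interv_value s G v w = if v \in EnCn F then Fn F v w else s v) ->
  sim G F.
Proof.
move=> vG vF H.
have GF v w : v \in En G -> Fn G v w = if v \in EnCn F then Fn F v w else s v.
  by move=> vEG; rewrite -H /interv_value vEG.
have EE : EnCn G = EnCn F.
  apply/setP => v; case vE: (v \in EnCn F); case vEG: (v \in En G).
  - by apply: (eq_Fn_EnCn vEG _ vE) => w; rewrite GF // vE.
  - suff : v \notin EnCn F by rewrite vE.
    apply: (@notin_EnCn_const _ _ (s v)) => w.
    by move: (H v w); rewrite /interv_value vEG vE => ->.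
  - by apply/negbTE/(@notin_EnCn_const _ _ (s v)) => w; rewrite GF // vE.
  - by apply: contraFF vEG; apply: EnCn_En.
apply/simE; split=> // v; rewrite EE => vE.
have vEG : v \in En G by rewrite EnCn_En // EE.
by apply: eq_Fn_sim_fun (EnCn_En vE) _ => // w; rewrite GF // vE.
Qed.

Lemma sat_Phi_sim U F : gcteam U -> valid F ->
  sat U (Phi F) <-> forall p, p \in U -> sim p.2 F.
Proof.
move=> gU vF; rewrite sat_Phi // => [|p /gU []//].
split=> H p pU; have [vp cp] := gU p pU.
  exact: interv_value_sim vp vF (H p pU).
exact: sim_interv_value cp (H p pU).
Qed.

Lemma sat_bigAnd_eqs T s :
  sat T (bigAnd [seq FEq (s v) | v <- enum V]) <-> forall p, p \in T -> p.1 = s.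
Proof.
rewrite sat_bigAnd_map ?(mem_nonnil (mem_enum _ (var0 sg))) //.
split=> [H p pT|H v _ p pT]; last by rewrite H.
by apply/ffunP => v; apply: H; rewrite ?mem_enum.
Qed.

Lemma sat_Theta U (A : {set assn sg}) :
  sat U (Theta A) <-> forall p, p \in U -> p.1 \in A.
Proof.
split=> [H p pU|H].
  have [s [T' [/[!mem_enum] sA _ pT' /sat_bigAnd_eqs T's]]] := sat_bigOr_witness H pU.
  by rewrite T's.
apply: (sat_bigOr_cover (K := fun s => [set p in U | p.1 == s])) => [|s _]; last first.
  by apply/sat_bigAnd_eqs => p /[!inE] /andP [_ /eqP].
apply/setP => p; rewrite bigcup_seq; apply/idP/bigcupP => [pU|[s _ /[!inE] /andP [] //]].
by exists p.1; rewrite ?mem_enum ?H // inE pU eqxx.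
Qed.

Lemma Tminus_restrFP T F s :
  reflect (exists2 q, q \in T & sim q.2 F /\ q.1 = s) (s \in Tminus (restrF T F)).
Proof.
apply: (iffP imsetP) => [[q /[!inE] /andP [qT qF] ->]|[q qT [qF <-]]].
  by exists q.
by exists q; rewrite // inE qT.
Qed.

Lemma in_Fsigma F : (F \in Fsigma sg) = valid F.
Proof. by rewrite mem_filter mem_enum andbT. Qed.

Definition sim_covered S T :=
  forall p, p \in S -> exists2 q, q \in T & q.1 = p.1 /\ sim q.2 p.2.

Lemma sat_bigformula S T : gcteam S -> sat S (bigformula T) <-> sim_covered S T.
Proof.
move=> gS; split=> [H p pS | cov].
  have [F [S' [/[!in_Fsigma] vF sS' pS' [S'T S'F]]]] := sat_bigOr_witness H pS.
  have /Tminus_restrFP [q qT [qF qp]] := proj1 (sat_Theta _ _) S'T p pS'.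
  have pF := proj1 (sat_Phi_sim (gcteam_subset gS sS') vF) S'F p pS'.
  by exists q => //; split=> //; apply: sim_trans qF (sim_sym pF).
pose K F := [set p in S | sim p.2 F && (p.1 \in Tminus (restrF T F))].
apply: (sat_bigOr_cover (K := K)) => [|F /[!in_Fsigma] vF].
  (* every p lies in the disjunct of its own system p.2 *)
  apply/setP => p; rewrite bigcup_seq; apply/idP/bigcupP => [pS|[F _]]; last first.
    by rewrite inE => /andP [].
  have [vp _] := gS p pS; have [q qT [qp qsim]] := cov p pS.
  exists p.2; first by rewrite in_Fsigma.
  by rewrite inE pS sim_refl //=; apply/Tminus_restrFP; exists q.
have gK : gcteam (K F).
  by apply: gcteam_subset gS _; apply/subsetP => p /[!inE] /andP [].
split; first by apply/sat_Theta => p /[!inE] /and3P [].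
by apply/(sat_Phi_sim gK vF) => p /[!inE] /and3P [].
Qed.

Lemma preceq_sim_covered S T : (forall p, p \in S -> valid p.2) ->
  preceq S T <-> sim_covered S T.
Proof.
move=> vS; split=> [[-> p /[!inE] //|[R [RT SR]]] p pS | cov].
  have : p.1 \in Tminus (restrF R p.2).
    by rewrite -SR ?vS //; apply/Tminus_restrFP; exists p; rewrite ?sim_refl ?vS.
  by case/Tminus_restrFP => q qR [qp <-]; exists q; rewrite ?(subsetP RT).
right; exists [set q in T | [exists p in S, (p.1 == q.1) && sim p.2 q.2]].
split=> [|F vF]; first by apply/subsetP => q /[!inE] /andP [].
apply/setP => s; apply/Tminus_restrFP/Tminus_restrFP => [[p pS [pF <-]]|[q]].
  have [q qT [qp qsim]] := cov p pS.
  exists q; last by split=> //; apply: sim_trans qsim pF.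
  by rewrite inE qT; apply/exists_inP; exists p; rewrite // qp eqxx sim_sym.
rewrite inE => /andP [qT /exists_inP [p pS /andP [/eqP pq psim]]] [qF <-].
by exists p => //; split; [apply: sim_trans psim qF | rewrite pq].
Qed.

End Characterization.

Theorem corollary4p9 (sg : signature) (S T : team sg) :
  gcteam S -> gcteam T ->
  (sat S (bigformula T) <-> preceq S T).
Proof.
(* only the pairs of S need to be compatible and recursive *)
move=> gS _; rewrite sat_bigformula // preceq_sim_covered //.
by move=> p /gS [].
Qed.
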